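(* Let $\mathcal{O}$ be an order of $K$ and let $(r,\tau),(r',\tau')\in\mathbb{Z}/f\mathbb{Z}\times H^{\mathcal{O}}(\mathfrak{N})$. Put $\tau^*=\frac{-1}{fN\tau}$ and $\tau'^*=\frac{-1}{fN\tau'}$. Then $(r,\tau)\sim_f(r',\tau')$ if and only if $(r',\tau^* )\sim_f(r,\tau'^* )$.
   Context: $K$ real quadratic with discriminant $d_K$ and nontrivial automorphism $\sigma$; $N=\prod l_i^{e_i}$ with $l_i$ distinct primes split in $K$; $\mathfrak{N}=\prod\eta_i^{e_i}$ with $\eta_i$ a prime of $\mathcal{O}_K$ above $l_i$; $f$ a positive integer coprime to $Nd_K$. $\Lambda_\tau=\mathbb{Z}+\tau\mathbb{Z}$, $\mathcal{O}_\tau=\{\lambda\in K:\lambda\Lambda_\tau\subseteq\Lambda_\tau\}$. Product convention: $\mathfrak{N}\Lambda_\tau$ means $(\mathfrak{N}\cap\mathcal{O}_\tau)\Lambda_\tau$. $H(\mathfrak{N})=\{\tau\in K:\mathfrak{N}\Lambda_\tau=\Lambda_{N\tau},\ \tau-\tau^\sigma>0\}$ and $H^{\mathcal{O}}(\mathfrak{N})=\{\tau\in H(\mathfrak{N}):\mathcal{O}_\tau=\mathcal{O}\}$. For $(r,\tau),(r',\tau')\in\mathbb{Z}/f\mathbb{Z}\times(K\setminus\mathbb{Q})$, $(r,\tau)\sim_f(r',\tau')$ means there is $\gamma=\begin{pmatrix}a&b\\c&d\end{pmatrix}\in\Gamma_0(fN)$ with $d^{-1}r\equiv r'\pmod f$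 and $\tau'=\frac{a\tau+b}{c\tau+d}$. *)

(* The real quadratic field K is modelled concretely as
   Q(sqrt D), D a squarefree integer > 1; an element a + b sqrt D is the
   pair (a, b) : rat * rat. The real embedding is the one with sqrt D > 0. *)
From mathcomp Require Import all_boot all_order all_algebra.
Set Implicit Arguments. Unset Strict Implicit. Unset Printing Implicit Defensive.
Import Order.TTheory GRing.Theory Num.Theory.
Local Open Scope ring_scope.

Definition qK := (rat * rat)%type.
Definition kset := qK -> Prop.

Definition kofZ (m : int) : qK := (m%:~R, 0).
Definition kzero : qK := (0, 0).
Definition kone : qK := (1, 0).
Definition kadd (x y : qK) : qK := (x.1 + y.1, x.2 + y.2).
Definition kopp (x : qK) : qK := (- x.1, - x.2).
Definition kmul (D : nat) (x y : qK) : qK :=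
  (x.1 * y.1 + D%:R * x.2 * y.2, x.1 * y.2 + x.2 * y.1).
(* field norm, inverse (0 maps to 0), Galois conjugation sigma *)
Definition knorm (D : nat) (x : qK) : rat := x.1 ^+ 2 - D%:R * x.2 ^+ 2.
Definition kinv (D : nat) (x : qK) : qK :=
  (x.1 / knorm D x, - x.2 / knorm D x).
Definition kconj (x : qK) : qK := (x.1, - x.2).
(* x > 0 in the real embedding with sqrt D > 0 *)
Definition kpos (D : nat) (x : qK) : Prop :=
  if 0 <= x.2 then (0 < x.1) \/ (x.1 ^+ 2 < D%:R * x.2 ^+ 2)
  else (0 < x.1) /\ (D%:R * x.2 ^+ 2 < x.1 ^+ 2).

Definition moeb (D : nat) (a b c d : int) (t : qK) : qK :=
  kmul D (kadd (kmul D (kofZ a) t) (kofZ b))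
         (kinv D (kadd (kmul D (kofZ c) t) (kofZ d))).

Definition squarefree (n : nat) : Prop := forall p, prime p -> ~~ (p ^ 2 %| n)%N.
Definition dK (D : nat) : nat := if (D %% 4 == 1)%N then D else (4 * D)%N.

(* ring of integers O_K: elements with integral trace and norm *)
Definition OK (D : nat) : kset := fun x =>
  (2 * x.1 \is a Num.int) /\ (knorm D x \is a Num.int).

Definition ksum (s : seq qK) : qK := foldr kadd kzero s.
Definition smul (D : nat) (A B : kset) : kset := fun z =>
  exists s : seq (qK * qK),
    (forall p, p \in s -> A p.1 /\ B p.2) /\
    z = ksum [seq kmul D p.1 p.2 | p <- s].
Definition seteq (A B : kset) : Prop := forall x, A x <-> B x.
Definition setI (A B : kset) : kset := fun x => A x /\ B x.

Definition is_ideal (D : nat) (I : kset) : Prop :=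
  (forall x, I x -> OK D x) /\ I kzero /\
  (forall x y, I x -> I y -> I (kadd x y)) /\
  (forall x y, OK D x -> I y -> I (kmul D x y)).
Definition is_prime_ideal (D : nat) (P : kset) : Prop :=
  is_ideal D P /\ ~ P kone /\
  (forall x y, OK D x -> OK D y -> P (kmul D x y) -> P x \/ P y).
Definition ipow (D : nat) (I : kset) (e : nat) : kset :=
  iter e (smul D I) (OK D).
Definition lOK (D : nat) (l : nat) : kset :=
  smul D (fun x => x = kofZ l%:Z) (OK D).
Definition splits (D : nat) (l : nat) : Prop :=
  exists P Q : kset, is_prime_ideal D P /\ is_prime_ideal D Q /\
    ~ seteq P Q /\ seteq (lOK D l) (smul D P Q).

Definition Lam (D : nat) (t : qK) : kset := fun x =>
  exists m n : int, x = kadd (kofZ m) (kmul D (kofZ n) t).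
Definition Otau (D : nat) (t : qK) : kset := fun lam =>
  forall x, Lam D t x -> Lam D t (kmul D lam x).
Definition is_order (D : nat) (O : kset) : Prop :=
  O kone /\ (forall x y, O x -> O y -> O (kmul D x y)) /\
  exists w1 w2 : qK, w1.1 * w2.2 - w1.2 * w2.1 != 0 /\
    forall x, O x <-> exists m n : int,
      x = kadd (kmul D (kofZ m) w1) (kmul D (kofZ n) w2).

(* H(Nfrak) and H^O(Nfrak); N Lambda_tau means (Nfrak cap O_tau) Lambda_tau *)
Definition inH (D N : nat) (Nf : kset) (t : qK) : Prop :=
  seteq (smul D (setI Nf (Otau D t)) (Lam D t)) (Lam D (kmul D (kofZ N%:Z) t))
  /\ kpos D (kadd t (kopp (kconj t))).
Definition inHO (D N : nat) (Nf O : kset) (t : qK) : Prop :=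
  inH D N Nf t /\ seteq (Otau D t) O.

(* (r,t) ~_f (r',t'): exists gamma in Gamma_0(fN) with d^{-1} r = r' mod f
   and t' = gamma t. Classes of Z/fZ are represented by integers. *)
Definition simf (D f N : nat) (r : int) (t : qK) (r' : int) (t' : qK) : Prop :=
  exists a b c d : int,
    a * d - b * c = 1 /\ ((f * N)%N%:Z %| c)%Z /\
    (exists u : int, (u * d == 1 %[mod f%:Z])%Z && (u * r == r' %[mod f%:Z])%Z) /\
    t' = moeb D a b c d t.

Definition tstar (D f N : nat) (t : qK) : qK :=
  kopp (kinv D (kmul D (kofZ (f * N)%N%:Z) t)).

(* The Fricke matrix W = [[0, -1], [fN, 0]] sends tau to tau^* and normalises
   Gamma_0(fN): W [[a, b], [c, d]] W^-1 = [[d, -c/fN], [-fN b, a]].  Hence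
   tau' = gamma tau iff tau'^* = (W gamma W^-1) tau^*, and since a d = 1 mod f
   the entry a of the conjugated matrix is the inverse of d mod f, which swaps
   the roles of r and r'.  As tau |-> tau^* is an involution, the converse is
   the same implication with tau, tau' replaced by tau^*, tau'^*.  To compute
   in K we embed Q(sqrt D) into algC; this is injective because sqrt D is
   irrational for squarefree D > 1. *)
From mathcomp Require Import all_boot all_order all_algebra all_field.
From mathcomp Require Import ring zify.
Import Order.TTheory GRing.Theory Num.Theory.
Local Open Scope ring_scope.

Lemma sqrtC_squarefree_irr (D : nat) :
  (1 < D)%N -> squarefree D -> sqrtC D%:R \notin Crat.
Proof.
move=> D_gt1 sqfD; apply/negP=> /Cint_rat_Aint.
have Aint_sqrtD : sqrtC D%:R \in Aint.
  apply: (@root_monic_Aint ('X^2 - (D%:R)%:P)).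
  - by rewrite rootE !hornerE sqrtCK subrr.
  - exact: monicXnsubC.
  - by rewrite polyOverXnsubC rpred_nat.
case/(_ Aint_sqrtD)/intrP=> n sqrtD_n.
have Dn : D = (`|n| ^ 2)%N.
  have Dn_int : D%:Z = n ^+ 2.
    by apply: (@intr_inj algC); rewrite rmorphXn /= -sqrtD_n sqrtCK.
  by rewrite -abszX -Dn_int.
have p_prime : prime (pdiv `|n|) by apply: pdiv_prime; nia.
by have := sqfD _ p_prime; rewrite Dn dvdn_exp2r ?pdiv_dvd.
Qed.

Lemma fricke_mobius (F : fieldType) (M a b c d x : F) : M != 0 -> x != 0 ->
  let y := - (M * x)^-1 in
  - (M * ((a * x + b) / (c * M * x + d)))^-1 = (d * y - c) / (- (M * b) * y + a).
Proof.
move=> M_neq0 x_neq0 y.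
have -> : d * y - c = - (c * M * x + d) / (M * x).
  by rewrite /y; field; rewrite M_neq0 x_neq0.
have -> : - (M * b) * y + a = (a * x + b) / x.
  by rewrite /y; field; rewrite M_neq0 x_neq0.
rewrite invfM invf_div [in RHS]invf_div invfM.
by move: (a * x + b)^-1 => p_inv; field; rewrite M_neq0 x_neq0.
Qed.

Lemma fricke_involutive (F : fieldType) (M x : F) : M != 0 ->
  - (M * - (M * x)^-1)^-1 = x.
Proof. by move=> M_neq0; rewrite mulrN invrN opprK invfM invrK mulKf. Qed.

Lemma inverse_mod_swap (f a d u r r' : int) :
  (a * d == 1 %[mod f])%Z -> (u * d == 1 %[mod f])%Z -> (u * r == r' %[mod f])%Z ->
  (d * a == 1 %[mod f])%Z && (d * r' == r %[mod f])%Z.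
Proof.
rewrite !eqz_mod_dvd mulrC => -> /= ud ur.
have -> : d * r' - r = (u * d - 1) * r - d * (u * r - r') by ring.
by rewrite rpredB ?(dvdz_mulr _ ud) ?(dvdz_mull _ ur).
Qed.

Lemma kconj_eq0 (x : qK) : (kconj x == kzero) = (x == kzero).
Proof. by case: x => x1 x2; rewrite /kconj !xpair_eqE oppr_eq0. Qed.

Lemma kpos_sub_kconj_neq0 (D : nat) (t : qK) :
  kpos D (kadd t (kopp (kconj t))) -> t != kzero.
Proof.
apply: contraPneq => ->.
by rewrite /kpos /= !oppr0 !addr0 expr0n mulr0 ltxx => -[].
Qed.

Section RealEmbedding.

Variable D : nat.
Hypotheses (D_gt1 : (1 < D)%N) (sqfD : squarefree D).

Let sqrtD : algC := sqrtC D%:R.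

Definition kembed (x : qK) : algC := ratr x.1 + ratr x.2 * sqrtD.

Lemma kembed0 : kembed kzero = 0.
Proof. by rewrite /kembed /= rmorph0 mul0r addr0. Qed.

Lemma kembed_int (m : int) : kembed (kofZ m) = m%:~R.
Proof. by rewrite /kembed /= rmorph0 mul0r addr0 rmorph_int. Qed.

Lemma kembedD (x y : qK) : kembed (kadd x y) = kembed x + kembed y.
Proof. by rewrite /kembed /= !rmorphD /=; ring. Qed.

Lemma kembedN (x : qK) : kembed (kopp x) = - kembed x.
Proof. by rewrite /kembed /= !rmorphN /=; ring. Qed.

Lemma kembedM (x y : qK) : kembed (kmul D x y) = kembed x * kembed y.
Proof.
rewrite /kembed /= !rmorphD !rmorphM /= rmorph_nat -(sqrtCK D%:R) -/sqrtD; ring.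
Qed.

Lemma kembed_norm (x : qK) : ratr (knorm D x) = kembed x * kembed (kconj x).
Proof.
rewrite /kembed /knorm /= rmorphB !rmorphM rmorphN /= rmorph_nat.
by rewrite -(sqrtCK D%:R) -/sqrtD; ring.
Qed.

Lemma kembed_eq0 (x : qK) : kembed x = 0 -> x = kzero.
Proof.
move=> /eqP; rewrite addr_eq0 => /eqP x1_sqrtD.
have [x2_0 | x2_neq0] := eqVneq x.2 0.
  move: x1_sqrtD; rewrite x2_0 rmorph0 mul0r oppr0 => /eqP; rewrite fmorph_eq0.
  by case: x x2_0 => ? ? /= -> /eqP ->.
case/negP: (@sqrtC_squarefree_irr D D_gt1 sqfD); rewrite -/sqrtD.
have -> : sqrtD = - ratr x.1 / ratr x.2.
  by rewrite x1_sqrtD opprK [ratr x.2 * _]mulrC mulfK // fmorph_eq0.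
by rewrite rpred_div ?rpredN ?Crat_rat.
Qed.

Lemma kembed_inj : injective kembed.
Proof.
move=> [x1 x2] [y1 y2] e.
have /kembed_eq0 [] : kembed (kadd (x1, x2) (kopp (y1, y2))) = 0.
  by rewrite kembedD kembedN e subrr.
by move=> /eqP; rewrite subr_eq0 => /eqP -> /eqP; rewrite subr_eq0 => /eqP ->.
Qed.

Lemma kembedV (x : qK) : kembed (kinv D x) = (kembed x)^-1.
Proof.
have [-> | x_neq0] := eqVneq x kzero.
  by rewrite kembed0 invr0 /kinv /kembed /= !(mul0r, oppr0, rmorph0, addr0).
have kconj_neq0 : kembed (kconj x) != 0.
  by apply: contra_neq x_neq0 => /kembed_eq0 /eqP; rewrite kconj_eq0 => /eqP.
have -> : kembed (kinv D x) = kembed (kconj x) / ratr (knorm D x).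
  by rewrite /kembed /kinv /= !fmorph_div !rmorphN /=; ring.
by rewrite kembed_norm invfM mulrCA mulfV ?mulr1.
Qed.

Lemma kembed_moeb (a b c d : int) (t : qK) :
  kembed (moeb D a b c d t) = (a%:~R * kembed t + b%:~R) / (c%:~R * kembed t + d%:~R).
Proof. by rewrite /moeb kembedM kembedV !kembedD !kembedM !kembed_int. Qed.

Lemma kembed_tstar (f N : nat) (t : qK) :
  kembed (tstar D f N t) = - ((f * N)%N%:R * kembed t)^-1.
Proof. by rewrite /tstar kembedN kembedV kembedM kembed_int. Qed.

Section Level.

Variables f N : nat.
Hypothesis fN_gt0 : (0 < f * N)%N.

Let fN_neq0 : (f * N)%N%:R != 0 :> algC.
Proof. by rewrite pnatr_eq0 -lt0n. Qed.

Lemma tstarK : involutive (tstar D f N).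
Proof. by move=> t; apply: kembed_inj; rewrite !kembed_tstar fricke_involutive. Qed.

Lemma tstar_eq0 (t : qK) : (tstar D f N t == kzero) = (t == kzero).
Proof.
rewrite -!(inj_eq kembed_inj) kembed_tstar kembed0 oppr_eq0 invr_eq0.
by rewrite mulf_eq0 (negbTE fN_neq0).
Qed.

Lemma tstar_moeb (a b c d : int) (t : qK) : t != kzero ->
  tstar D f N (moeb D a b (c * (f * N)%N%:Z) d t) =
  moeb D d (- c) (- ((f * N)%N%:Z * b)) a (tstar D f N t).
Proof.
move=> t_neq0; apply: kembed_inj.
rewrite kembed_tstar !kembed_moeb kembed_tstar !rmorphN !rmorphM /=.
apply: fricke_mobius; first by rewrite -natrM.
by apply: contra_neq t_neq0; apply: kembed_eq0.
Qed.

Lemma simf_tstar (r r' : int) (t t' : qK) : t != kzero ->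
  simf D f N r t r' t' -> simf D f N r' (tstar D f N t) r (tstar D f N t').
Proof.
move=> t_neq0 [a [b [c [d [det [/dvdzP [c0 c_def] [[u /andP [ud ur]] ->]]]]]]].
subst c; exists d, (- c0), (- ((f * N)%N%:Z * b)), a.
split; first by rewrite -det; ring.
split; first by apply/dvdzP; exists (- b); ring.
split; last exact: tstar_moeb.
exists d; apply: inverse_mod_swap ud ur.
rewrite eqz_mod_dvd (_ : a * d - 1 = b * c0 * f%:Z * N%:Z).
  by apply/dvdz_mulr/dvdz_mull/dvdzz.
by rewrite -det PoszM; ring.
Qed.

End Level.

End RealEmbedding.

Theorem lemma9p1 (D : nat) (k : nat) (l e : nat -> nat) (eta : nat -> kset)
  (N : nat) (Nf : kset) (f : nat) (O : kset)
  (r r' : int) (t t' : qK) :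
  (1 < D)%N -> squarefree D ->
  (forall i, (i < k)%N -> prime (l i) /\ (0 < e i)%N /\ splits D (l i) /\
     is_prime_ideal D (eta i) /\ eta i (kofZ (l i)%:Z)) ->
  (forall i j, (i < k)%N -> (j < k)%N -> l i = l j -> i = j) ->
  N = (\prod_(i < k) l i ^ e i)%N ->
  seteq Nf (foldr (fun i J => smul D (ipow D (eta i) (e i)) J) (OK D) (iota 0 k)) ->
  (0 < f)%N -> coprime f (N * dK D) ->
  is_order D O ->
  inHO D N Nf O t -> inHO D N Nf O t' ->
  (simf D f N r t r' t' <-> simf D f N r' (tstar D f N t) r (tstar D f N t')).
Proof.
move=> D_gt1 sqfD l_prime _ N_def _ f_gt0 _ _ [[_ /kpos_sub_kconj_neq0 t_neq0] _] _.
have N_gt0 : (0 < N)%N.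
  rewrite N_def prodn_gt0 // => i; rewrite expn_gt0.
  by have [/prime_gt0 -> _] := l_prime i (ltn_ord i).
have fN_gt0 : (0 < f * N)%N by rewrite muln_gt0 f_gt0.
split; first exact: simf_tstar.
have tstar_t_neq0 : tstar D f N t != kzero by rewrite tstar_eq0.
by move/simf_tstar; rewrite !tstarK //; apply.
Qed.
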